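(* Let $k$ be an algebraically closed field, $B$ a finite-dimensional $k$-algebra, $P_0$ a finitely generated projective $B$-module, and $A=B[P_0]$ the one-point extension algebra. Let $\mathcal{R}:\mathrm{Mod}\text{-}A\to\mathrm{Mod}\text{-}B$ and $\mathcal{E}:\mathrm{Mod}\text{-}B\to\mathrm{Mod}\text{-}A$ be the restriction and extension functors, and let $S$ be the simple injective $A$-module described below. For an $A$-module $X$, let $\delta_X:X\to\mathcal{E}\mathcal{R}X$ be the unit of the adjunction $(\mathcal{R},\mathcal{E})$ at $X$. Then $\delta_X$ is an epimorphism if and only if $\mathrm{Ext}^1_A(S,X)=0$.
   Context: All modules are left modules; $\mathrm{Mod}\text{-}R$ denotes the category of all $R$-modules. $A=B[P_0]$ is the matrix algebra $\begin{pmatrix} B & P_0\\ 0 & k\end{pmatrix}$ with matrix addition and multiplication induced by the $B$-module structure of $P_0$. Let $e_B$ be the identity of $B$, viewed as an idempotent of $A$. The restriction functor is $\mathcal{R}=\mathrm{Hom}_A(Ae_B,-)$ and the extension functor is $\mathcal{E}=\mathrm{Hom}_B(e_BA,-)$; $(\mathcal{R},\mathcal{E})$ is an adjoint pair, both functors are exact. There is a unique indecomposable projective $A$-module $\tilde P$ which is not a projective $B$-module; $S$ denotes its simple top, which is an injective $A$-module of projective dimension at most one. *)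

From HB Require Import structures.
From mathcomp Require Import all_boot all_algebra all_field.
Set Implicit Arguments.
Unset Strict Implicit.
Unset Printing Implicit Defensive.
Import GRing.Theory.
Local Open Scope ring_scope.

Definition fin_gen (B : nzRingType) (M : lmodType B) : Prop :=
  exists s : seq M, forall m : M,
    exists c : seq B, m = \sum_(i < size s) c`_i *: s`_i.

Definition projective_mod (B : nzRingType) (P : lmodType B) : Prop :=
  forall (M N : lmodType B) (pi : M -> N) (phi : P -> N),
    linear pi -> linear phi -> (forall n, exists m, pi m = n) ->
    exists psi : P -> M, linear psi /\ forall p, pi (psi p) = phi p.

(* An element (b, p, l) stands for the matrix [[b, p], [0, l]].             *)

Section OnePoint.
Variables (k : fieldType) (B : falgType k) (P0 : lmodType B).

Definition onept : Type := (B * P0 * k)%type.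
HB.instance Definition _ := GRing.Zmodule.on onept.

(* right action of k on P0 (P0 is a B-k-bimodule through k -> B) *)
Definition kact (l : k) (p : P0) : P0 := (l%:A : B) *: p.

Definition onept_one : onept := (1, 0, 1).
Definition onept_mul (x y : onept) : onept :=
  (x.1.1 * y.1.1, x.1.1 *: y.1.2 + kact y.2 x.1.2, x.2 * y.2).

Lemma kactD l : {morph kact l : p q / p + q}.
Proof. by move=> p q; rewrite /kact scalerDr. Qed.
Lemma kactDl p l m : kact (l + m) p = kact l p + kact m p.
Proof. by rewrite /kact scalerDl scalerDl. Qed.
Lemma kact1 p : kact 1 p = p.
Proof. by rewrite /kact scale1r scale1r. Qed.
Lemma kact0 p : kact 0 p = 0.
Proof. by rewrite /kact scale0r scale0r. Qed.
Lemma kact0r l : kact l 0 = 0.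
Proof. by rewrite /kact scaler0. Qed.
Lemma kactA l m p : kact l (kact m p) = kact (m * l) p.
Proof. by rewrite /kact scalerA -scalerAl mul1r scalerA mulrC. Qed.
Lemma kactC l (b : B) p : b *: kact l p = kact l (b *: p).
Proof. by rewrite /kact !scalerA -scalerAl mul1r -scalerAr mulr1. Qed.

Lemma onept_mulA : associative onept_mul.
Proof.
move=> [[a p l]] [[b q m]] [[c r n]]; rewrite /onept_mul /=.
congr (_, _, _); rewrite ?mulrA //.
by rewrite scalerDr kactD kactC scalerA kactA addrA.
Qed.

Lemma onept_mul1r : left_id onept_one onept_mul.
Proof.
by move=> [[a p l]]; rewrite /onept_mul /= !mul1r scale1r kact0r addr0.
Qed.

Lemma onept_mulr1 : right_id onept_one onept_mul.
Proof.
by move=> [[a p l]]; rewrite /onept_mul /= !mulr1 scaler0 add0r kact1.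
Qed.

Lemma onept_mulDl : left_distributive onept_mul +%R.
Proof.
move=> [[a p l]] [[b q m]] [[c r n]]; rewrite /onept_mul /=.
congr (_, _, _); rewrite ?mulrDl //.
by rewrite scalerDl kactD addrACA.
Qed.

Lemma onept_mulDr : right_distributive onept_mul +%R.
Proof.
move=> [[a p l]] [[b q m]] [[c r n]]; rewrite /onept_mul /=.
congr (_, _, _); rewrite ?mulrDr //.
by rewrite scalerDr kactDl addrACA.
Qed.

Lemma onept_oner_neq0 : onept_one != 0.
Proof.
apply/eqP => /(congr1 snd) /= /eqP; by rewrite oner_eq0.
Qed.

HB.instance Definition _ := GRing.Zmodule_isNzRing.Build onept
  onept_mulA onept_mul1r onept_mulr1 onept_mulDl onept_mulDr onept_oner_neq0.

(* The idempotents e_B = (1,0,0) and e_k = (0,0,1). *)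
Definition eB : onept := (1, 0, 0).

(* The projective A-module A e_B = {(b,0,0)}, identified with its
   (1,1)-entry b : B; A acts by left multiplication:
   (c,q,m) (b,0,0) = (c b, 0, 0). *)
Definition AeB : Type := (fun _ : lmodType B => (B : Type)) P0.
HB.instance Definition _ := GRing.Zmodule.on AeB.
Definition AeB_scale (a : onept) (z : AeB) : AeB := (a.1.1 * (z : B) : B).
Lemma AeB_scalerA a b v : AeB_scale a (AeB_scale b v) = AeB_scale (a * b) v.
Proof. by rewrite /AeB_scale mulrA. Qed.
Lemma AeB_scale1r : left_id 1 AeB_scale.
Proof. by move=> v; rewrite /AeB_scale mul1r. Qed.
Lemma AeB_scalerDr : right_distributive AeB_scale +%R.
Proof. by move=> a u v; rewrite /AeB_scale mulrDr. Qed.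
Lemma AeB_scalerDl v : {morph AeB_scale^~ v : a b / a + b}.
Proof. by move=> a b; rewrite /AeB_scale mulrDl. Qed.
HB.instance Definition _ := GRing.Zmodule_isLmodule.Build onept AeB
  AeB_scalerA AeB_scale1r AeB_scalerDr AeB_scalerDl.
Definition inAeB (z : AeB) : onept := ((z : B), 0, 0).

(* The B-module e_B A = {(b,p,0)}, identified with pairs (b,p); the left
   action of B = e_B A e_B is (c,0,0)(b,p,0) = (c b, c p, 0). *)
Definition eBA : lmodType B := (B^o * P0)%type.
Definition ineBA (y : eBA) : onept := (y.1 : B, y.2, 0).

(* The simple A-module S = top of the projective A e_k = {(0,p,l)}:
   S = k, with (b,p,l) acting by multiplication by l. *)
Definition Smod : Type := (fun _ : lmodType B => k) P0.
HB.instance Definition _ := GRing.Zmodule.on Smod.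
Definition S_scale (a : onept) (z : Smod) : Smod := (a.2 * (z : k) : k).
Lemma S_scalerA a b v : S_scale a (S_scale b v) = S_scale (a * b) v.
Proof. by rewrite /S_scale mulrA. Qed.
Lemma S_scale1r : left_id 1 S_scale.
Proof. by move=> v; rewrite /S_scale mul1r. Qed.
Lemma S_scalerDr : right_distributive S_scale +%R.
Proof. by move=> a u v; rewrite /S_scale mulrDr. Qed.
Lemma S_scalerDl v : {morph S_scale^~ v : a b / a + b}.
Proof. by move=> a b; rewrite /S_scale mulrDl. Qed.
HB.instance Definition _ := GRing.Zmodule_isLmodule.Build onept Smod
  S_scalerA S_scale1r S_scalerDr S_scalerDl.

(* Restriction R X = Hom_A(A e_B, X), extension E Y = Hom_B(e_B A, Y).      *)
(* We describe the underlying set of E (R X) through predicates on plain    *)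
(* functions  g : e_B A -> (A e_B -> X).                                     *)

Definition in_R (X : lmodType onept) (f : AeB -> X) : Prop := linear f.

(* The B-module structure of R X: (b . f)(z) = f (z b), with z b computed
   in A as (z,0,0)(b,0,0) = (z b,0,0). *)
Definition R_scale (X : lmodType onept) (b : B) (f : AeB -> X) : AeB -> X :=
  fun z => f ((z : B) * b : AeB).

Definition in_ER (X : lmodType onept) (g : eBA -> AeB -> X) : Prop :=
  (forall y, in_R (g y)) /\
  (forall (b : B) (y y' : eBA) (z : AeB),
      g (b *: y + y') z = R_scale b (g y) z + g y' z).

Definition unit_ER (X : lmodType onept) (x : X) : eBA -> AeB -> X :=
  fun y z => (inAeB z * ineBA y) *: x.

(* delta_X is an epimorphism (i.e. surjective) in Mod-A. *)
Definition unit_ER_epi (X : lmodType onept) : Prop :=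
  forall g : eBA -> AeB -> X, in_ER g ->
    exists x : X, forall y z, unit_ER x y z = g y z.

(* Ext^1_A(M, X) = 0 (Yoneda description): every short exact sequence
   0 -> X -> E -> M -> 0 of A-modules splits. *)
Definition Ext1_zero (M X : lmodType onept) : Prop :=
  forall (E : lmodType onept) (f : X -> E) (g : E -> M),
    linear f -> linear g -> injective f -> (forall m, exists e, g e = m) ->
    (forall e, g e = 0 <-> exists x, e = f x) ->
    exists s : M -> E, linear s /\ forall m, g (s m) = m.

End OnePoint.

From HB Require Import structures.
From mathcomp Require Import all_boot all_algebra all_field.
Set Implicit Arguments.
Unset Strict Implicit.
Unset Printing Implicit Defensive.
Import GRing.Theory.
Local Open Scope ring_scope.

(* Both sides are equivalent to [rad_homs_extend X]: every A-linear map h from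
   rad(A e_k) = {(0,p,0)} to X is p |-> (0,p,0) x for some x.  For Ext^1 this is
   the long exact sequence of 0 -> rad(A e_k) -> A e_k -> S -> 0: h extends iff
   the pushout along h splits, and an extension of S by X yields such an h from
   a lift of 1 in S.  For delta_X, E R X = Hom_B(e_B A, e_B X) is
   e_B X (+) Hom_B(P0, e_B X); delta_X is onto the first summand, and on the
   second it is x |-> (p |-> (0,p,0) x). *)

Section LinearFun.
Variables (R : pzRingType) (U V : lmodType R) (f : U -> V).
Hypothesis linf : linear f.

Lemma linear_funZ a u : f (a *: u) = a *: f u.
Proof. exact: (GRing.semilinear_linear linf).1. Qed.

Lemma linear_funD : {morph f : u v / u + v}.
Proof. exact: (GRing.semilinear_linear linf).2. Qed.

Lemma linear_fun0 : f 0 = 0.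
Proof. by rewrite -(scale0r 0) linear_funZ scale0r. Qed.

Lemma linear_funN u : f (- u) = - f u.
Proof. by rewrite -scaleN1r linear_funZ scaleN1r. Qed.

End LinearFun.

Section OnePointModules.
Variables (k : fieldType) (B : falgType k) (P0 : lmodType B).
Local Notation A := (onept P0).

Definition mk (b : B) (p : P0) (l : k) : A := (b, p, l).

Lemma mkM b p l c q m :
  mk b p l * mk c q m = mk (b * c) (b *: q + kact m p) (l * m).
Proof. by []. Qed.

Lemma mkD b p l c q m : mk b p l + mk c q m = mk (b + c) (p + q) (l + m).
Proof. by []. Qed.

Lemma AeB_scaleE (a : A) (z : AeB P0) : a *: z = (a.1.1 * (z : B) : B).
Proof. by []. Qed.

Lemma Smod_scaleE (a : A) (z : Smod P0) : a *: z = (a.2 * (z : k) : k).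
Proof. by []. Qed.

(* An A-linear map from rad(A e_k) = {(0,p,0)} to X; as an A-module this
   radical is P0 with A acting through its corner B. *)
Record rad_hom (X : lmodType A) := RadHom {
  rad_hom_fun :> P0 -> X;
  rad_homD : {morph rad_hom_fun : p q / p + q};
  rad_homZ : forall (a : A) p, a *: rad_hom_fun p = rad_hom_fun (a.1.1 *: p) }.

Definition rad_homs_extend (X : lmodType A) : Prop :=
  forall h : rad_hom X, exists x : X, forall p, h p = mk 0 p 0 *: x.

Lemma rad_hom0 (X : lmodType A) (h : rad_hom X) : h 0 = 0.
Proof. by apply: (@addrI _ (h 0)); rewrite -rad_homD !addr0. Qed.

Section Pushout.
Variables (X : lmodType A) (h : rad_hom X).

(* The pushout of 0 -> rad(A e_k) -> A e_k -> S -> 0 along h: (x, l) stands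
   for x + l e_k, and a (0,0,l) = (0,l a_12,0) + (0,0,a_22 l) with the first
   summand sent to X by h. *)
Definition pushout : Type := (fun _ : rad_hom X => (X * k)%type) h.
HB.instance Definition _ := GRing.Zmodule.on pushout.

Definition pushout_scale (a : A) (e : pushout) : pushout :=
  (a *: e.1 + h (kact e.2 a.1.2), a.2 * e.2).

Lemma pushout_scalerA a b v :
  pushout_scale a (pushout_scale b v) = pushout_scale (a * b) v.
Proof.
case: v => x m; case: a => [[a1 a2] a3]; case: b => [[b1 b2] b3].
rewrite /pushout_scale /= /onept_mul /=; congr (_, _); last by rewrite mulrA.
rewrite scalerDr scalerA rad_homZ /= kactC -addrA -rad_homD.
by rewrite kactD kactA.
Qed.

Lemma pushout_scale1r : left_id 1 pushout_scale.
Proof.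
case=> x m; rewrite /pushout_scale /= mul1r scale1r kact0r rad_hom0.
by rewrite addr0.
Qed.

Lemma pushout_scalerDr : right_distributive pushout_scale +%R.
Proof.
move=> a [x m] [y n]; rewrite /pushout_scale /= mulrDr scalerDr kactDl.
by rewrite rad_homD addrACA.
Qed.

Lemma pushout_scalerDl v : {morph pushout_scale^~ v : a b / a + b}.
Proof.
case: v => x m a b; rewrite /pushout_scale /= mulrDl scalerDl kactD.
by rewrite rad_homD addrACA.
Qed.

HB.instance Definition _ := GRing.Zmodule_isLmodule.Build A pushout
  pushout_scalerA pushout_scale1r pushout_scalerDr pushout_scalerDl.

Lemma pushout_scaleE (a : A) (e : pushout) : a *: e = pushout_scale a e.
Proof. by []. Qed.

Lemma pushout_inl_linear : linear (fun x : X => (x, 0) : pushout).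
Proof.
move=> a x y; rewrite pushout_scaleE /pushout_scale /= kact0 rad_hom0.
rewrite mulr0 !addr0.
by change ((a *: x + y, 0) = (a *: x + y, 0 + 0) :> X * k); rewrite addr0.
Qed.

Lemma pushout_snd_linear : linear (fun e : pushout => e.2 : Smod P0).
Proof. by []. Qed.

End Pushout.

Lemma Ext1_zero_rad_homs_extend (X : lmodType A) :
  Ext1_zero (Smod P0) X -> rad_homs_extend X.
Proof.
move=> ext0 h.
have [||| s [lins sK]] := ext0 (pushout h) _ _
  (@pushout_inl_linear _ h) (@pushout_snd_linear _ h).
- by move=> x y [].
- by move=> m; exists (0, m).
- by case=> x m; split=> [/= ->|[y [_ ->]]]; first exists x.
exists (- (s 1).1) => p.
have /(congr1 fst) : s (mk 0 p 0 *: (1 : Smod P0)) = mk 0 p 0 *: s 1.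
  exact: linear_funZ.
rewrite Smod_scaleE mul0r linear_fun0 // pushout_scaleE /= sK kact1.
by move=> /esym/eqP; rewrite addrC addr_eq0 scalerN => /eqP.
Qed.

Lemma rad_homs_extend_Ext1_zero (X : lmodType A) :
  rad_homs_extend X -> Ext1_zero (Smod P0) X.
Proof.
move=> extX E f g linf ling injf surjg kerg.
have gZ a e : g (a *: e) = (a.2 * (g e : k) : k) by exact: linear_funZ.
have [e0 ge0] := surjg 1.
have rad_in_ker p : exists x, mk 0 p 0 *: e0 == f x.
  have [|x ->] := (kerg (mk 0 p 0 *: e0)).1; first by rewrite gZ mul0r.
  by exists x.
pose h0 p := xchoose (rad_in_ker p).
have h0E p : f (h0 p) = mk 0 p 0 *: e0.
  exact/esym/eqP/(xchooseP (rad_in_ker p)).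
have h0D : {morph h0 : p q / p + q}.
  move=> p q; apply: injf; rewrite linear_funD // !h0E -scalerDl mkD.
  by rewrite !addr0.
have h0Z (a : A) p : a *: h0 p = h0 (a.1.1 *: p).
  apply: injf; rewrite linear_funZ // !h0E scalerA; case: a => [[a1 a2] a3].
  by rewrite mkM kact0 addr0 !mulr0.
have [x hx] := extX (RadHom h0D h0Z).
pose e := e0 - f x.
have rad_e p : mk 0 p 0 *: e = 0.
  by rewrite scalerDr scalerN -(linear_funZ linf) -(hx p) /= h0E addrN.
have gfx : g (f x) = 0 by apply/(kerg _).2; exists x.
have ge : g e = 1 by rewrite linear_funD // linear_funN // gfx ge0 subr0.
exists (fun m : Smod P0 => mk 0 0 m *: e); split; last first.
  by move=> m; rewrite gZ ge /= mulr1.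
move=> a m n; rewrite Smod_scaleE scalerA -scalerDl.
case: a => [[a1 a2] a3] /=.
have -> : mk 0 0 (a3 * m + n) =
    mk 0 (- kact m a2) 0 + (mk a1 a2 a3 * mk 0 0 m + mk 0 0 n).
  by rewrite mkM !mkD mulr0 scaler0 !add0r !addr0 addNr.
by rewrite [LHS]scalerDl rad_e add0r.
Qed.

Lemma inAeB_mul_mk (z b : B) :
  inAeB (z : AeB P0) * mk b 0 0 = inAeB (z * b : AeB P0).
Proof.
by rewrite /inAeB -[(z, 0, 0)]/(mk z 0 0) mkM scaler0 kact0 addr0 mulr0.
Qed.

Lemma inAeB_mul_ineBA (z : B) (y : eBA P0) :
  inAeB (z : AeB P0) * ineBA y = mk (z * y.1) (z *: y.2) 0.
Proof.
rewrite /inAeB /ineBA -[(z, 0, 0)]/(mk z 0 0) -[(y.1 : B, _, _)]/(mk y.1 y.2 0).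
by rewrite mkM kact0r addr0 mulr0.
Qed.

Lemma inAeB_linear (a : A) (z z' : AeB P0) :
  inAeB (a *: z + z') = a * inAeB z + inAeB z'.
Proof.
case: a => [[a1 a2] a3]; rewrite /inAeB -[(z : B, _, _)]/(mk z 0 0).
by rewrite mkM mkD scaler0 kact0 !addr0 mulr0.
Qed.

Lemma unit_ER_epi_rad_homs_extend (X : lmodType A) :
  unit_ER_epi X -> rad_homs_extend X.
Proof.
move=> epiX h.
pose G (y : eBA P0) (z : AeB P0) : X := inAeB z *: h y.2.
have GER : in_ER G.
  split=> [y a z z' | b y y' z].
    by rewrite /G inAeB_linear scalerDl scalerA.
  rewrite /G /R_scale /= rad_homD scalerDr -inAeB_mul_mk -scalerA.
  by rewrite [mk b 0 0 *: _]rad_homZ.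
have [x hx] := epiX G GER.
exists x => p; have := hx (0, p) (1 : B).
rewrite /unit_ER /G inAeB_mul_ineBA /= mulr0 scale1r => ->.
by rewrite rad_homZ /= scale1r.
Qed.

Lemma eBA_decomp (y : eBA P0) : y = y.1 *: (1, 0) + (0, y.2).
Proof.
case: y => y1 y2; apply: injective_projections => /=.
  by rewrite addr0 [RHS]mulr1.
by rewrite scaler0 add0r.
Qed.

Section ExtensionOfRestriction.
Variables (X : lmodType A) (G : eBA P0 -> AeB P0 -> X).
Hypothesis GER : in_ER G.

Lemma ER_addl z : {morph G^~ z : y y' / y + y'}.
Proof. by move=> y y'; rewrite -[y in LHS]scale1r GER.2 /R_scale mulr1. Qed.

Lemma ER_0l z : G 0 z = 0.
Proof. by apply: (@addrI _ (G 0 z)); rewrite -ER_addl !addr0. Qed.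

Lemma ER_scalel b y z : G (b *: y) z = G y (z * b : B).
Proof. by rewrite -[b *: y]addr0 GER.2 ER_0l addr0. Qed.

Lemma ER_mulr y z : G y z = inAeB z *: G y (1 : B).
Proof.
rewrite -(linear_funZ (GER.1 y)); congr (G y _).
by rewrite AeB_scaleE /= mulr1.
Qed.

Lemma ER_decomp y z :
  G y z = inAeB z *: (inAeB y.1 *: G (1, 0) (1 : B) + G (0, y.2) (1 : B)).
Proof.
rewrite ER_mulr; congr (_ *: _).
by rewrite -ER_mulr -[y.1 in RHS]mul1r -ER_scalel -ER_addl -eBA_decomp.
Qed.

Lemma ER_radD : {morph (fun p => G (0, p) (1 : B)) : p q / p + q}.
Proof.
move=> p q; rewrite -ER_addl; congr (G _ _).
by apply: injective_projections => /=; rewrite ?addr0.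
Qed.

Lemma ER_radZ (a : A) p : a *: G (0, p) (1 : B) = G (0, a.1.1 *: p) (1 : B).
Proof.
rewrite -(linear_funZ (GER.1 _)) AeB_scaleE /= mulr1 -[a.1.1]mul1r -ER_scalel.
by congr (G _ _); apply: injective_projections; rewrite /= ?scaler0 ?mul1r.
Qed.

Definition ER_rad_hom : rad_hom X := RadHom ER_radD ER_radZ.

End ExtensionOfRestriction.

Lemma rad_homs_extend_unit_ER_epi (X : lmodType A) :
  rad_homs_extend X -> unit_ER_epi X.
Proof.
move=> extX G GER; have [x1 hx1] := extX (ER_rad_hom GER).
pose u := G (1, 0) (1 : B).
have uE : mk 1 0 0 *: u = u.
  by rewrite /u [RHS](ER_mulr GER).
exists (u + mk 0 0 1 *: x1) => y z.
have hG p : G (0, p) (1 : B) = mk 0 p 0 *: x1 := hx1 p.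
rewrite /unit_ER (ER_decomp GER) inAeB_mul_ineBA -/u hG -{1}uE.
rewrite !scalerDr !scalerA -[inAeB z]/(mk z 0 0) -[inAeB y.1]/(mk y.1 0 0) !mkM.
by rewrite !scaler0 !kact0 kact1 !addr0 !add0r !mulr0 mulr1 mul0r.
Qed.

End OnePointModules.

Theorem lemma2p4 (k : closedFieldType) (B : falgType k) (P0 : lmodType B)
  (fgP0 : fin_gen P0) (projP0 : projective_mod P0)
  (X : lmodType (onept P0)) :
  unit_ER_epi X <-> Ext1_zero (Smod P0) X.
Proof.
split=> [/unit_ER_epi_rad_homs_extend | /Ext1_zero_rad_homs_extend].
  exact: rad_homs_extend_Ext1_zero.
exact: rad_homs_extend_unit_ER_epi.
Qed.
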